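(* Let $f:\mathcal X\to\mathbb R$ be bounded and measurable and let $Q$ be a probability distribution on $\mathcal X$. Then for any $\delta\in(0,1]$ and $\varepsilon>0$: (a) $Q(\{x\in\mathcal X:f(x)\le\varepsilon L_{f/\varepsilon}-\varepsilon\log(1/\delta)-\varepsilon D_{\sup\text{-}\log}(P_{f/\varepsilon},Q)\})\le\delta$; (b) $Q(\{x\in\mathcal X:f(x)\le\varepsilon L_{f/\varepsilon}-\varepsilon\log(1/\delta)\})\le\delta+D_{\mathrm{TV}}(P_{f/\varepsilon},Q)$; (c) if $f$ is Lipschitz with minimal Lipschitz constant $|f|_1$, then $Q(\{x\in\mathcal X:f(x)<\varepsilon L_{f/\varepsilon}-\varepsilon\log(2/\delta)-2\delta^{-1}|f|_1W_1(P_{f/\varepsilon},Q)\})\le\delta$.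
   Context: $\mathcal X=[0,1]^d$ with Lebesgue measure. For bounded measurable $h$: $Z_h=\int_{\mathcal X}e^h dx$, $L_h=\log Z_h$, $P_h$ the distribution with density $e^h/Z_h$. $D_{\sup\text{-}\log}(P,Q)=\|\log(dP/dQ)\|_\infty$ ($\infty$ unless mutually absolutely continuous); $D_{\mathrm{TV}}(P,Q)=\sup_A|P(A)-Q(A)|$; $W_1(P,Q)=\inf_{X\sim P,Y\sim Q}\mathbb E\|X-Y\|_2$. Lipschitz constants are with respect to the Euclidean norm. *)

From HB Require Import structures.
From mathcomp Require Import all_boot all_order all_algebra.
From mathcomp Require Import all_classical all_reals all_analysis.
Set Implicit Arguments. Unset Strict Implicit. Unset Printing Implicit Defensive.
Import Order.TTheory GRing.Theory Num.Theory.
Import numFieldNormedType.Exports.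
Local Open Scope classical_set_scope.
Local Open Scope ring_scope.

Section Defs.
Context {R : realType} {d : nat}.
Notation T := (d.-tuple R).

Definition cube : set T := [set x | forall i : 'I_d, 0 <= tnth x i <= 1].

Definition euclid (x y : T) : R :=
  Num.sqrt (\sum_(i < d) (tnth x i - tnth y i) ^+ 2).

(* lam is (the) Lebesgue measure on the product sigma-algebra of R^d:
   it gives every box ]a,b] its volume.  This determines lam uniquely. *)
Definition is_lebesgue (lam : set T -> \bar R) : Prop :=
  forall a b : T, (forall i, tnth a i <= tnth b i) ->
    lam [set x | forall i, tnth a i < tnth x i <= tnth b i] =
    (\prod_(i < d) (tnth b i - tnth a i))%:E.

Definition Zh (lam : {measure set T -> \bar R}) (h : T -> R) : R :=
  Rintegral lam cube (fun x => expR (h x)).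
Definition Lh (lam : {measure set T -> \bar R}) (h : T -> R) : R :=
  ln (Zh lam h).
Definition Ph (lam : {measure set T -> \bar R}) (h : T -> R) (A : set T) : \bar R :=
  (\int[lam]_(x in A `&` cube) (expR (h x) / Zh lam h)%:E)%E.

(* D_{sup-log}(P,Q) = || log dP/dQ ||_oo (ess. sup w.r.t. Q), +oo unless
   P and Q are mutually absolutely continuous: the infimum of the c >= 0
   such that dP/dQ = e^g with |g| <= c Q-a.e. *)
Definition Dsuplog (P : set T -> \bar R) (Q : probability T R) : \bar R :=
  ereal_inf [set c%:E | c in [set c : R | 0 <= c /\
     exists g : T -> R, measurable_fun setT g /\
       (forall A, measurable A -> P A = (\int[Q]_(x in A) (expR (g x))%:E)%E) /\
       {ae Q, forall x, `|g x| <= c}]].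

Definition Dtv (P : set T -> \bar R) (Q : probability T R) : \bar R :=
  ereal_sup [set `|(P A - Q A)%E|%E | A in [set A : set T | measurable A]].

Definition coupling (pi : probability (T * T)%type R) (P : set T -> \bar R)
    (Q : probability T R) : Prop :=
  (forall A, measurable A -> pi (A `*` setT) = P A) /\
  (forall B, measurable B -> pi (setT `*` B) = Q B).
Definition W1 (P : set T -> \bar R) (Q : probability T R) : \bar R :=
  ereal_inf [set e | exists pi : probability (T * T)%type R,
     coupling pi P Q /\ e = (\int[pi]_z (euclid z.1 z.2)%:E)%E].

Definition lipschitz_on_cube (f : T -> R) (L : R) : Prop :=
  0 <= L /\ forall x y, cube x -> cube y -> `|f x - f y| <= L * euclid x y.
Definition lip_const (f : T -> R) : R := inf [set L | lipschitz_on_cube f L].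

End Defs.

Set Warnings "-notation-overridden,-ambiguous-paths,-notation-incompatible-prefix".
From HB Require Import structures.
From mathcomp Require Import all_boot all_order all_algebra.
From mathcomp Require Import all_classical all_reals all_analysis.
From mathcomp Require Import ring lra measurable_realfun.
Import Order.TTheory GRing.Theory Num.Theory.
Import numFieldNormedType.Exports.
Local Open Scope classical_set_scope.
Local Open Scope ring_scope.

(* The density e^(f/eps)/Z of P := P_(f/eps) is at most delta exactly where
   f <= eps L - eps log(1/delta), and the cube has Lebesgue measure 1, so P
   gives that sublevel set mass at most delta.  Each divergence transfers this
   bound from P to Q: for (a) because dQ/dP <= e^D, with the threshold lowered
   by eps D; for (b) because |P(A) - Q(A)| <= D_TV.  For (c), take a coupling
   of P and Q of cost close to W1, at scale r = 2 W1 / delta: a point y with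
   f(y) < t - |f|_1 r is either matched with an x in {f <= t}, which has
   P-mass <= delta/2, or with an x at distance >= r, and by Markov such pairs
   have mass <= delta/2.  Since the infimum defining W1 need not be attained,
   this is done with a slack e > 0 in the threshold, and the strict sublevel
   set is the increasing union over e -> 0. *)

Set Implicit Arguments.
Unset Strict Implicit.

Lemma expr1D_le_chord (R : realFieldType) (e : R) n :
  0 <= e <= 1 -> (1 + e) ^+ n <= 1 + e * (2 ^+ n - 1).
Proof.
move=> /andP[e0 e1]; elim: n => [|n IH]; first by rewrite !expr0 subrr mulr0 addr0.
have p1 : 1 <= (2 : R) ^+ n by apply: exprn_ege1; lra.
rewrite !exprS; set p := (2 : R) ^+ n in IH p1 *; set q := (1 + e) ^+ n in IH *.
have : 0 <= e * (1 - e) * (p - 1) by rewrite !mulr_ge0 //; lra.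
have : (1 + e) * q <= (1 + e) * (1 + e * (p - 1)) by apply: ler_wpM2l; lra.
lra.
Qed.

Lemma le1_expr1D (R : realFieldType) (c : R) n :
  (forall e, 0 < e -> c <= (1 + e) ^+ n) -> c <= 1.
Proof.
move=> Hc; apply/ler_addgt0Pr => e e0.
have p1 : 1 <= (2 : R) ^+ n by apply: exprn_ege1; lra.
set e' := Num.min 1 (e / 2 ^+ n).
have e'0 : 0 < e' by rewrite lt_min ltr01 divr_gt0 //; lra.
have e'1 : e' <= 1 by rewrite ge_min lexx.
have e'e : e' * 2 ^+ n <= e.
  by rewrite -ler_pdivlMr ?ge_min ?lexx ?orbT //; lra.
have := Hc e' e'0; have := @expr1D_le_chord _ e' n; rewrite e'1 ltW //=.
nra.
Qed.

Lemma ler_mul_expR_gt0 (R : realType) (a b : R) : 0 <= b ->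
  (forall e, 0 < e -> a <= b * expR e) -> a <= b.
Proof.
move=> b0 Hab; apply/ler_addgt0Pr => e e0.
have b1 : 0 < b + 1 by lra.
have e2 : 1 < 1 + e / (b + 1) by rewrite ltrDl divr_gt0.
apply: (le_trans (Hab _ (ln_gt0 e2))).
rewrite lnK ?posrE ?(lt_trans ltr01 e2) // mulrDr mulr1 lerD2l mulrCA ger_pMr //.
by rewrite ler_pdivrMr //; lra.
Qed.

Section measurable_sublevel.
Context {d : measure_display} {T : measurableType d} {R : realType}.
Context {D : set T} {g : T -> R} (mD : measurable D) (mg : measurable_fun D g).

Lemma measurable_sublevel_le (c : R) : measurable [set x | D x /\ g x <= c].
Proof.
have -> : [set x | D x /\ g x <= c] = D `&` g @^-1` [set` `]-oo, c]].
  by apply/seteqP; split => x /= [Dx gx]; split => //; move: gx; rewrite in_itv.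
exact: mg.
Qed.

Lemma measurable_sublevel_lt (c : R) : measurable [set x | D x /\ g x < c].
Proof.
have -> : [set x | D x /\ g x < c] = D `&` g @^-1` [set` `]-oo, c[].
  by apply/seteqP; split => x /= [Dx gx]; split => //; move: gx; rewrite in_itv.
exact: mg.
Qed.

Lemma measure_sublevel_lt_le (mu : {measure set T -> \bar R}) (a : R) (c : \bar R) :
  (forall e, 0 < e -> (mu [set x | D x /\ (g x < a - e)%R] <= c)%E) ->
  (mu [set x | D x /\ (g x < a)%R] <= c)%E.
Proof.
move=> Hc; pose F n := [set x | D x /\ g x < a - n.+1%:R^-1].
have mF n : measurable (F n) by exact: measurable_sublevel_lt.
have -> : [set x | D x /\ g x < a] = \bigcup_n F n.
  apply/seteqP; split => [x [Dx gx]|x [n _ [Dx gx]]]; last first.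
    by split => //; apply: lt_le_trans gx _; rewrite gerBl.
  have ga : 0 < a - g x by rewrite subr_gt0.
  exists (Num.truncn (a - g x)^-1) => //; split => //.
  rewrite ltrBrDl -ltrBrDr -ltf_pV2 ?posrE ?invr_gt0 // invrK.
  exact: truncnS_gt.
have ndF : nondecreasing_seq F.
  move=> m n mn; apply/subsetPset => x [Dx gx]; split => //.
  by apply: lt_le_trans gx _; rewrite lerD2l lerN2 lef_pV2 ?posrE ?ler_nat.
have cvF := nondecreasing_cvg_mu (mu := mu) mF (bigcupT_measurable F mF) ndF.
rewrite -(cvg_lim _ cvF) //; apply: lime_le; first exact: cvgP cvF.
by apply: nearW => n; exact: Hc.
Qed.

End measurable_sublevel.

Section lebesgue_cube.
Variables (R : realType) (d : nat).
Local Notation T := (d.-tuple R).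

Lemma measurable_tuple_box (B : 'I_d -> set R) : (forall i, measurable (B i)) ->
  measurable [set x : T | forall i, B i (tnth x i)].
Proof.
move=> mB; have -> : [set x : T | forall i, B i (tnth x i)] =
    \bigcap_(i in [set: 'I_d]) (setT `&` (fun x : T => tnth x i) @^-1` B i).
  by apply/seteqP; split => x /= Bx i; [move=> _; split|have [] := Bx i I].
apply: fin_bigcap_measurable; first exact: finite_finset.
by move=> i _; exact: measurable_tnth.
Qed.

Lemma measurable_cube : measurable (@cube R d).
Proof.
have -> : @cube R d = [set x : T | forall i, [set` `[(0 : R), 1]] (tnth x i)].
  by apply/seteqP; split => x /= cx i; have := cx i; rewrite /= in_itv.
by apply: (@measurable_tuple_box (fun=> [set` `[(0 : R), 1]])) => i; exact: measurable_itv.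
Qed.

Lemma measurable_cst_box (a b : R) :
  measurable [set x : T | forall i, a < tnth x i <= b].
Proof.
have -> : [set x : T | forall i, a < tnth x i <= b] =
    [set x : T | forall i, [set` `]a, b]] (tnth x i)].
  by apply/seteqP; split => x /= Hx i; have := Hx i; rewrite /= in_itv.
by apply: (@measurable_tuple_box (fun=> [set` `]a, b]])) => i; exact: measurable_itv.
Qed.

Variable lam : {measure set T -> \bar R}.
Hypothesis Hlam : is_lebesgue lam.

Lemma is_lebesgue_cst_box (a b : R) : a <= b ->
  lam [set x : T | forall i, a < tnth x i <= b] = ((b - a) ^+ d)%:E.
Proof.
move=> ab; have := @Hlam [tuple a | _ < d] [tuple b | _ < d].
rewrite (eq_bigr (fun=> b - a)) => [|i _]; last by rewrite !tnth_mktuple.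
rewrite prodr_const card_ord => <- => [|i]; last by rewrite !tnth_mktuple.
by congr (lam _); apply/seteqP; split => x /= Hx i; have := Hx i; rewrite !tnth_mktuple.
Qed.

Lemma is_lebesgue_cube : lam cube = 1%E.
Proof.
have le_box e : 0 < e -> (lam cube <= ((1 + e) ^+ d)%:E)%E.
  move=> e0; rewrite -[e]opprK -is_lebesgue_cst_box; last lra.
  apply: le_measure; rewrite ?inE; [exact: measurable_cube|exact: measurable_cst_box|].
  by move=> x cx i; have /andP[? ->] := cx i; rewrite andbT; lra.
have ge_box : (1 <= lam cube)%E.
  have := @is_lebesgue_cst_box 0 1 ler01; rewrite subr0 expr1n => <-.
  apply: le_measure; rewrite ?inE; [exact: measurable_cst_box|exact: measurable_cube|].
  by move=> x Hx i; have /andP[/ltW -> ->] := Hx i.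
have := le_box 1 ltr01.
case E : (lam cube) ge_box => [r| |] //; rewrite !lee_fin => r1 _.
congr EFin; apply/eqP; rewrite eq_le r1 andbT.
by apply: (@le1_expr1D _ _ d) => e e0; have := le_box e e0; rewrite E lee_fin.
Qed.

Section gibbs.
Variable h : T -> R.

Lemma Ph_setCcube : Ph lam h (~` cube) = 0%E.
Proof. by rewrite /Ph setICl integral_set0. Qed.

Hypothesis h_meas : measurable_fun cube h.
Variable M : R.
Hypothesis h_bdd : forall x, cube x -> `|h x| <= M.

Let expRh_meas : measurable_fun (@cube R d) (fun x => (expR (h x))%:E).
Proof. by apply/measurable_EFinP; apply: measurableT_comp h_meas. Qed.

Lemma integral_expR_bounds :
  ((expR (- M))%:E <= \int[lam]_(x in cube) (expR (h x))%:E <= (expR M)%:E)%E.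
Proof.
have [mc lam1] := (measurable_cube, is_lebesgue_cube).
rewrite -[(expR (- M))%:E]mule1 -[(expR M)%:E]mule1 -lam1 -!integral_cst //.
apply/andP; split; apply: ge0_le_integral => //.
- by move=> x _; rewrite lee_fin expR_ge0.
all: by move=> x cx; rewrite lee_fin ler_expR; have := h_bdd cx; rewrite ler_norml => /andP[].
Qed.

Lemma Zh_integral : (\int[lam]_(x in cube) (expR (h x))%:E = (Zh lam h)%:E)%E.
Proof.
have /andP[lo up] := integral_expR_bounds.
rewrite /Zh /Rintegral fineK // ge0_fin_numE; last exact: le_trans lo.
exact: le_lt_trans up (ltry _).
Qed.

Lemma Zh_gt0 : 0 < Zh lam h.
Proof.
have /andP[lo _] := integral_expR_bounds; rewrite Zh_integral lee_fin in lo.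
exact: lt_le_trans (expR_gt0 _) lo.
Qed.

Lemma Ph_ge0 (A : set T) : (0 <= Ph lam h A)%E.
Proof.
by apply: integral_ge0 => x _; rewrite lee_fin divr_ge0 ?expR_ge0 // ltW // Zh_gt0.
Qed.

Lemma Ph_cube : Ph lam h cube = 1%E.
Proof.
rewrite /Ph setIid; under eq_integral do rewrite mulrC EFinM.
rewrite ge0_integralZl_EFin //; last by rewrite invr_ge0 ltW // Zh_gt0.
- by rewrite Zh_integral -EFinM mulVf // gt_eqF // Zh_gt0.
- exact: measurable_cube.
Qed.

Lemma Ph_le_density (A : set T) (k : R) : measurable A -> 0 <= k ->
  (forall x, A x -> cube x -> expR (h x) / Zh lam h <= k) -> (Ph lam h A <= k%:E)%E.
Proof.
move=> mA k0 Hk; have mAc := measurableI _ _ mA measurable_cube.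
apply: (@le_trans _ _ (\int[lam]_(x in A `&` cube) k%:E)%E).
  apply: ge0_le_integral => //.
  - by move=> x _; rewrite lee_fin divr_ge0 ?expR_ge0 // ltW // Zh_gt0.
  - apply/measurable_EFinP; apply: measurable_funM => //.
    apply: measurable_funS (@subIsetr _ _ _) _ => //; first exact: measurable_cube.
    exact/measurable_EFinP.
  - by move=> x [Ax cx]; rewrite lee_fin; exact: Hk.
rewrite integral_cst // -[leRHS]mule1 lee_wpmul2l ?lee_fin //.
rewrite -is_lebesgue_cube; apply: le_measure; rewrite ?inE //.
exact: measurable_cube.
Qed.

Lemma Ph_sublevel (dl : R) (A : set T) : 0 < dl -> measurable A ->
  (forall x, A x -> cube x -> h x <= Lh lam h + ln dl) -> (Ph lam h A <= dl%:E)%E.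
Proof.
move=> dl0 mA HA; apply: Ph_le_density => // [|x Ax cx]; first exact: ltW.
rewrite ler_pdivrMr ?Zh_gt0 // -[leRHS]lnK ?posrE ?mulr_gt0 ?Zh_gt0 //.
by rewrite ler_expR lnM ?posrE ?Zh_gt0 // addrC; exact: HA.
Qed.

End gibbs.

End lebesgue_cube.

Section divergences.
Variables (R : realType) (d : nat).
Local Notation T := (d.-tuple R).
Variables (P : set T -> \bar R) (Q : probability T R).

Lemma Dsuplog_ge0 : (0 <= Dsuplog P Q)%E.
Proof. by apply: le_ereal_inf_tmp => _ [c [c0 _] <-]; rewrite lee_fin. Qed.

(* A density e^g with |g| <= c bounds Q A by e^c P A; then let c decrease to D_sup-log. *)
Lemma Dsuplog_le (A : set T) (r p : R) : measurable A -> Dsuplog P Q = r%:E ->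
  0 <= p -> (P A <= p%:E)%E -> (Q A <= (expR r * p)%:E)%E.
Proof.
move=> mA Dr p0 PA; rewrite -(fineK (fin_num_measure Q _ mA)) lee_fin.
have QA_le c : (0 <= c /\ exists g : T -> R, measurable_fun setT g /\
    (forall A, measurable A -> P A = (\int[Q]_(x in A) (expR (g x))%:E)%E) /\
    {ae Q, forall x, `|g x| <= c}) -> fine (Q A) <= expR c * p.
  move=> [_ [g [mg [Pg gc]]]].
  have : ((expR (- c))%:E * Q A <= P A)%E.
    rewrite Pg // -integral_cst //; apply: ae_ge0_le_integral => //.
    - by move=> x _; rewrite lee_fin expR_ge0.
    - by apply/measurable_EFinP; apply: measurable_funS (measurableT_comp _ mg).
    - apply: filterS gc => x gxc _; rewrite lee_fin ler_expR.
      by move: gxc; rewrite ler_norml => /andP[].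
  move=> /le_trans /(_ PA); rewrite -(fineK (fin_num_measure Q _ mA)) -EFinM lee_fin.
  by rewrite -ler_pdivlMl ?expR_gt0 // expRN invrK.
apply: ler_mul_expR_gt0 => [|e e0]; first by rewrite mulr_ge0 ?expR_ge0.
have : (Dsuplog P Q < (r + e)%:E)%E by rewrite Dr lte_fin ltrDl.
move=> /ereal_inf_lt[_ [c Sc <-]]; rewrite lte_fin => cre.
apply: (le_trans (QA_le c Sc)).
by rewrite mulrAC -expRD ler_wpM2r // ler_expR ltW.
Qed.

Lemma Dtv_le (A : set T) : measurable A -> P A \is a fin_num ->
  (Q A <= P A + Dtv P Q)%E.
Proof.
move=> mA PA; have QA := fin_num_measure Q _ mA.
have : (`|P A - Q A| <= Dtv P Q)%E by apply: ereal_sup_ubound; exists A.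
move=> /(leeD2l (P A)); apply: le_trans.
rewrite -(fineK PA) -(fineK QA) -EFinB abse_EFin -EFinD lee_fin.
by have := ler_norm (fine (Q A) - fine (P A)); rewrite distrC; lra.
Qed.

Lemma euclid_ge0 (x y : T) : 0 <= euclid x y.
Proof. exact: sqrtr_ge0. Qed.

Lemma measurable_euclid : measurable_fun setT (fun z : (T * T)%type => euclid z.1 z.2).
Proof.
apply: measurableT_comp; first exact: continuous_measurable_fun (@sqrt_continuous R).
apply: measurable_sum => i; apply: measurable_funX; apply: measurable_funB.
- by apply: (measurableT_comp (f := fun x : T => tnth x i) (g := fst)) => //; exact: measurable_tnth.
- by apply: (measurableT_comp (f := fun x : T => tnth x i) (g := snd)) => //; exact: measurable_tnth.
Qed.

Lemma W1_ge0 : (0 <= W1 P Q)%E.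
Proof.
apply: le_ereal_inf_tmp => _ [pi [_ ->]]; apply: integral_ge0 => z _.
by rewrite lee_fin euclid_ge0.
Qed.

Lemma measurable_euclid_ge (r : R) :
  measurable [set z : (T * T)%type | (r <= euclid z.1 z.2)%R].
Proof.
have := measurable_euclid measurableT (measurable_itv `[r, +oo[).
by rewrite setTI; congr measurable; apply/seteqP; split => z /=; rewrite in_itv /= andbT.
Qed.

Lemma coupling_markov (pi : probability (T * T)%type R) (r : R) : 0 < r ->
  (r%:E * pi [set z | (r <= euclid z.1 z.2)%R] <= \int[pi]_z (euclid z.1 z.2)%:E)%E.
Proof.
move=> r0.
have -> : [set z | (r <= euclid z.1 z.2)%R] = [set: T * T] `&` [set z | r%:E <= `|(euclid z.1 z.2)%:E|]%E.
  by rewrite setTI; apply/seteqP; split => z /=; rewrite lee_fin ger0_norm // euclid_ge0.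
have -> : (\int[pi]_z (euclid z.1 z.2)%:E = \int[pi]_z `|(euclid z.1 z.2)%:E|)%E.
  by apply: eq_integral => z _; rewrite abse_EFin ger0_norm ?euclid_ge0.
exact: le_integral_abse (proj2 (measurable_EFinP _ _) measurable_euclid) r0.
Qed.

Lemma coupling_sublevel_le (pi : probability (T * T)%type R) (f : T -> R) (l t r : R) :
  coupling pi P Q -> P (~` cube) = 0%E -> measurable_fun cube f ->
  lipschitz_on_cube f l ->
  (Q [set y | cube y /\ (f y < t - l * r)%R] <=
   P [set x | cube x /\ (f x <= t)%R] + pi [set z | (r <= euclid z.1 z.2)%R])%E.
Proof.
move=> [piP piQ] Pcube0 mf [l0 lip].
have mc := @measurable_cube R d.
pose S := [set x | cube x /\ (f x <= t)%R].
pose E := [set z : (T * T)%type | (r <= euclid z.1 z.2)%R].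
have mS : measurable S := measurable_sublevel_le mc mf t.
have mE : measurable E := measurable_euclid_ge r.
have mSC : measurable (S `*` [set: T] `|` ~` cube `*` [set: T]).
  by apply: measurableU; apply: measurableX => //; exact: measurableC.
rewrite -piQ; last exact: measurable_sublevel_lt.
apply: (@le_trans _ _ (pi (S `*` [set: T] `|` ~` cube `*` [set: T] `|` E))).
  apply: le_measure; rewrite ?inE; [|exact: measurableU|].
  - by apply: measurableX => //; exact: measurable_sublevel_lt.
  move=> [x y] [_ [cy fy]] /=.
  have [cx|] := pselect (cube x); last by left; right.
  have [fx|fx] := leP (f x) t; [by left; left|right].
  rewrite /E /= leNgt; apply/negP => dr.
  have := lip _ _ cx cy; have := ler_wpM2l l0 (ltW dr); have := ler_norm (f x - f y).
  lra.
apply: le_trans (measureU2 _ _ _) _ => //.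
apply: leeD => //; apply: le_trans (measureU2 _ _ _) _ => //; first exact: measurableX.
- by apply: measurableX => //; exact: measurableC.
- rewrite (_ : P _ = P S + P (~` cube))%E; last by rewrite Pcube0 adde0.
  by rewrite -(piP _ mS) -(piP _ (measurableC mc)).
Qed.

Lemma lip_const_lipschitz (f : T -> R) :
  (exists L, lipschitz_on_cube f L) -> lipschitz_on_cube f (lip_const f).
Proof.
move=> [L HL]; have ne : [set L | lipschitz_on_cube f L] !=set0 by exists L.
have l0 : 0 <= lip_const f by apply: lb_le_inf => // L' [].
split => // x y cx cy; apply/ler_addgt0Pr => e e0.
have u0 := euclid_ge0 x y; set u := euclid x y in u0 *.
have e' : 0 < e / (u + 1) by rewrite divr_gt0 //; lra.
have /(inf_lt ne)[L' [L'0 HL'] L'lt] : inf [set L | lipschitz_on_cube f L] < lip_const f + e / (u + 1).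
  by rewrite ltrDl.
have := HL' x y cx cy; rewrite -/u.
have : L' * u <= (lip_const f + e / (u + 1)) * u by rewrite ler_wpM2r // ltW.
have : e / (u + 1) * u <= e by rewrite mulrAC ler_pdivrMr ?ler_pM2l; lra.
rewrite mulrDl; lra.
Qed.

End divergences.

Section proposition15.
Variables (R : realType) (d : nat).
Local Notation T := (d.-tuple R).
Variable lam : {measure set T -> \bar R}.
Hypothesis Hlam : is_lebesgue lam.
Variable f : T -> R.
Hypothesis f_meas : measurable_fun cube f.
Variable M : R.
Hypothesis f_bdd : forall x, cube x -> `|f x| <= M.
Variable eps : R.
Hypothesis eps_gt0 : 0 < eps.
Variable Q : probability T R.

Let h := fun x => f x / eps.

Let h_meas : measurable_fun cube h.
Proof. exact: measurable_funM f_meas (measurable_cst _). Qed.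

Let h_bdd x : cube x -> `|h x| <= M / eps.
Proof.
by move=> cx; rewrite /h normrM [`|eps^-1|]gtr0_norm ?ler_pM2r ?invr_gt0 ?f_bdd.
Qed.

Let threshold_ln (c delta : R) : 0 < c -> 0 < delta ->
  eps * Lh lam h - eps * ln (c / delta) = eps * (Lh lam h + ln (delta / c)).
Proof.
by move=> c0 dl0; rewrite -[delta / c]invf_div lnV ?posrE ?divr_gt0 // mulrDr mulrN.
Qed.

Let Ph_level (dl : R) : 0 < dl ->
  (Ph lam h [set x | cube x /\ (f x <= eps * (Lh lam h + ln dl))%R] <= dl%:E)%E.
Proof.
move=> dl0; apply: (Ph_sublevel Hlam h_meas h_bdd) => // [|x [_ fx] _].
  exact: measurable_sublevel_le (@measurable_cube R d) f_meas _.
by rewrite /h ler_pdivrMr // mulrC.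
Qed.

Lemma gibbs_sup_log_tail (delta : R) : 0 < delta ->
  (Q [set x | cube x /\ ((f x)%:E <= (eps * Lh lam h - eps * ln (1 / delta))%:E
                    - eps%:E * Dsuplog (Ph lam h) Q)%E] <= delta%:E)%E.
Proof.
move=> dl0; have := Dsuplog_ge0 (Ph lam h) Q.
case DE : (Dsuplog _ _) => [r| |] // r0; last first.
  rewrite (_ : [set x | _] = set0) ?measure0 ?lee_fin ?ltW //.
  apply/seteqP; split => // x [_] /=.
  by rewrite muleC gt0_mulye ?lte_fin // addeNy leeNy_eq.
have dr0 : 0 < delta * expR (- r) by rewrite mulr_gt0 ?expR_gt0.
have dE : expR r * (delta * expR (- r)) = delta.
  by rewrite mulrCA -expRD subrr expR0 mulr1.
rewrite (_ : [set x | _] =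
  [set x | cube x /\ (f x <= eps * (Lh lam h + ln (delta * expR (- r))))%R]).
  rewrite -[X in (_ <= X%:E)%E]dE; apply: Dsuplog_le DE (ltW dr0) (Ph_level dr0).
  exact: measurable_sublevel_le (@measurable_cube R d) f_meas _.
apply/seteqP; split => x /= [cx fx]; split => //; move: fx.
all: rewrite -EFinD lee_fin threshold_ln ?ltr01 // divr1.
all: by rewrite lnM ?posrE ?expR_gt0 // expRK addrA mulrBr.
Qed.

Lemma gibbs_tv_tail (delta : R) : 0 < delta ->
  (Q [set x | cube x /\ (f x <= eps * Lh lam h - eps * ln (1 / delta))%R]
     <= delta%:E + Dtv (Ph lam h) Q)%E.
Proof.
move=> dl0; rewrite threshold_ln ?ltr01 // divr1.
have PA := Ph_level dl0.
apply: le_trans (Dtv_le _ _ _) (leeD2r _ PA).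
  exact: measurable_sublevel_le (@measurable_cube R d) f_meas _.
rewrite ge0_fin_numE; last exact: (Ph_ge0 Hlam h_meas h_bdd).
exact: le_lt_trans PA (ltry _).
Qed.

Let lip0_sublevel_empty (dl : R) (x : T) : 0 < dl < 1 -> lipschitz_on_cube f 0 ->
  cube x -> eps * (Lh lam h + ln dl) <= f x.
Proof.
move=> /andP[dl0 dl1] [_ lipf] cx; rewrite leNgt; apply/negP => fx.
suff : (1 <= dl%:E)%E by rewrite lee_fin leNgt dl1.
rewrite -(Ph_cube Hlam h_meas h_bdd); apply: le_trans (Ph_level dl0).
rewrite le_eqVlt; apply/orP; left; apply/eqP; congr (Ph lam h _).
apply/seteqP; split => [y cy|y []//]; split => //.
by have := lipf y x cy cx; rewrite mul0r normr_le0 subr_eq0 => /eqP ->; exact: ltW.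
Qed.

Let wasserstein_tail_slack (delta w e : R) : 0 < delta -> W1 (Ph lam h) Q = w%:E ->
  lipschitz_on_cube f (lip_const f) -> 0 < e ->
  (Q [set x | cube x /\ (f x < eps * (Lh lam h + ln (delta / 2))
                              - 2 / delta * lip_const f * w - e)%R] <= delta%:E)%E.
Proof.
move=> dl0 W1w lip e0; have [l0 _] := lip; set t := eps * _; set l := lip_const f.
set k := 2 / delta * l; have k0 : 0 <= k by rewrite mulr_ge0 // divr_ge0 // ltW.
have w0 : 0 <= w by rewrite -lee_fin -W1w W1_ge0.
pose eta := e / (k + 1); have eta0 : 0 < eta by rewrite divr_gt0 //; lra.
have : (W1 (Ph lam h) Q < (w + eta)%:E)%E by rewrite W1w lte_fin ltrDl.
move=> /ereal_inf_lt[_ [pi [cpl ->]] piW].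
pose r := 2 / delta * (w + eta); have r0 : 0 < r by rewrite mulr_gt0 ?divr_gt0 //; lra.
apply: (@le_trans _ _ (Q [set y | cube y /\ (f y < t - l * r)%R])).
  apply: le_measure; rewrite ?inE; try exact: measurable_sublevel_lt (@measurable_cube R d) f_meas _.
  move=> y [cy fy]; split => //; apply: lt_le_trans fy _.
  have keta : k * eta <= e by rewrite /eta mulrCA ger_pMr // ler_pdivrMr; lra.
  have -> : l * r = k * (w + eta) by rewrite /r /k mulrA [l * _]mulrC.
  by rewrite mulrDr; lra.
apply: le_trans (coupling_sublevel_le t r cpl (Ph_setCcube lam h) f_meas lip) _.
rewrite [X in (_ <= X%:E)%E](splitr delta) EFinD; apply: leeD.
  by apply: Ph_level; rewrite divr_gt0.
have rdl : r * (delta / 2) = w + eta by rewrite /r; field; rewrite gt_eqF.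
have := le_lt_trans (coupling_markov pi r0) piW.
rewrite -(fineK (fin_num_measure pi _ (measurable_euclid_ge r))) -EFinM lte_fin lee_fin.
by rewrite -rdl ltr_pM2l // => /ltW.
Qed.

Lemma gibbs_wasserstein_tail (delta : R) : 0 < delta <= 1 ->
  (exists L, lipschitz_on_cube f L) ->
  (Q [set x | cube x /\ ((f x)%:E < (eps * Lh lam h - eps * ln (2 / delta))%:E
                   - (2 / delta * lip_const f)%:E * W1 (Ph lam h) Q)%E] <= delta%:E)%E.
Proof.
move=> /andP[dl0 dl1] /lip_const_lipschitz lip; have [l0 _] := lip.
rewrite threshold_ln ?ltr0Sn //; set t := eps * _.
have := W1_ge0 (Ph lam h) Q.
case W1w : (W1 _ _) => [w| |] // _; last first.
  rewrite (_ : [set x | _] = set0) ?measure0 ?lee_fin ?ltW //.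
  apply/seteqP; split => // x [cx] /=.
  have [l_eq0|l_neq0] := eqVneq (lip_const f) 0; last first.
    have k_gt0 : 0 < 2 / delta * lip_const f by rewrite mulr_gt0 ?divr_gt0 // lt_def l_neq0.
    by rewrite muleC gt0_mulye ?lte_fin // addeNy ltNge leNye.
  rewrite l_eq0 mulr0 mul0e sube0 lte_fin ltNge; apply/negP/negPn.
  have lip0 : lipschitz_on_cube f 0 by rewrite -l_eq0.
  by apply: (lip0_sublevel_empty _ lip0 cx); rewrite divr_gt0 //=; lra.
rewrite (_ : [set x | _] = [set x | cube x /\ (f x < t - 2 / delta * lip_const f * w)%R]).
  apply: (measure_sublevel_lt_le (@measurable_cube R d) f_meas) => e e0.
  exact: wasserstein_tail_slack.
by apply/seteqP; split => x /= [cx fx]; split => //; move: fx; rewrite -EFinM -EFinB lte_fin.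
Qed.

End proposition15.

Unset Implicit Arguments.

Theorem proposition15 (R : realType) (d : nat)
  (lam : {measure set (d.-tuple R) -> \bar R}) (Hlam : is_lebesgue lam)
  (f : d.-tuple R -> R)
  (f_meas : measurable_fun (@cube R d) f)
  (f_bdd : exists M : R, forall x, cube x -> `|f x| <= M)
  (Q : probability (d.-tuple R) R) (HQ : Q (@cube R d) = 1%E)
  (delta eps : R) (Hdelta : 0 < delta <= 1) (Heps : 0 < eps) :
  let h := fun x => f x / eps in
  let P := Ph lam h in
  (* (a) *)
  (Q [set x | cube x /\
      ((f x)%:E <= (eps * Lh lam h - eps * ln (1 / delta))%:E
                    - eps%:E * Dsuplog P Q)%E] <= delta%:E)%E /\
  (* (b) *)
  (Q [set x | cube x /\
      (f x <= eps * Lh lam h - eps * ln (1 / delta))%R]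
     <= delta%:E + Dtv P Q)%E /\
  (* (c) *)
  ((exists L, lipschitz_on_cube f L) ->
   Q [set x | cube x /\
      ((f x)%:E < (eps * Lh lam h - eps * ln (2 / delta))%:E
                   - (2 / delta * lip_const f)%:E * W1 P Q)%E] <= delta%:E)%E.
Proof.
(* The bounds hold for every probability [Q]. *)
move=> h P; rewrite {}/P {}/h.
have [M f_bddM] := f_bdd; have delta_gt0 : 0 < delta by case/andP: Hdelta.
split; first exact: (gibbs_sup_log_tail Hlam f_meas f_bddM Heps Q delta_gt0).
split; first exact: (gibbs_tv_tail Hlam f_meas f_bddM Heps Q delta_gt0).
exact: (gibbs_wasserstein_tail Hlam f_meas f_bddM Heps Q Hdelta).
Qed.
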